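(* Let $\mathscr C$ and $J$ be as defined below. (i) Let $H$ be a non-trivial rank one subgroup of $\mathbb{R}$. Then $F_H(V):=V\cap H\cap(0,\infty)$, with a morphism $n\in\mathrm{Hom}_{\mathscr C}(V,W)$ acting as multiplication by $n$, defines a flat continuous functor $F_H:\mathscr C\to\mathfrak{Sets}$. (ii) The map $H\mapsto\mathfrak{p}_H$, which associates to a non-trivial rank one subgroup $H\subset\mathbb{R}$ the point of the topos $\mathfrak{Sh}(\mathscr C,J)$ represented by $F_H$, is injective from the set of non-trivial rank one subgroups of $\mathbb{R}$ to the set of isomorphism classes of points of this topos.
   Context: $\mathbb{N}^{\times}$ is the multiplicative monoid of positive integers. $\mathscr C$ is the small category whose objects are the (possibly empty) bounded open subintervals of $[0,\infty)$ (including intervals $[0,a)$), with $\mathrm{Hom}_{\mathscr C}(\Omega,\Omega')=\{n\in\mathbb{N}^{\times}\mid n\Omega\subset\Omega'\}$ for $\Omega\neq\emptyset$, $\mathrm{Hom}_{\mathscr C}(\emptyset,\Omega')$ a singleton, composition being multiplication. $J$ is the Grothendieck topology generated by ordinary open covers of intervals by subintervals. A rank one subgroup of $\mathbb{R}$ is a subgroup isomorphic to a non-zero subgroup of $\mathbb{Q}$. A functor $F:\mathscr C\to\mathfrak{Sets}$ is flat iff it is filtering: (1) $F(C)\neq\emptyset$ for some object $C$; (2) for $a_j\in F(C_j)$, $j=1,2$, there exist an object $C$, $a\in F(C)$ and morphisms $u_j:C\to C_j$ with $F(u_j)a=a_j$; (3) for morphisms $u,v:C\to D$ and $a\in F(C)$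 with $F(u)a=F(v)a$ there exist an object $B$, $b\in F(B)$ and $w:B\to C$ with $u\circ w=v\circ w$ and $F(w)b=a$. A flat functor is continuous iff for every object $U$ and cover $\{U_j\subset U\}$ the maps $F(U_j)\to F(U)$ are jointly surjective. Points of $\mathfrak{Sh}(\mathscr C,J)$ correspond (up to equivalence) to flat continuous functors $\mathscr C\to\mathfrak{Sets}$. *)

From Stdlib Require Import Reals Lra Lia QArith.
Open Scope R_scope.

(** Objects of C: the (possibly empty) bounded open subintervals of [0,oo),
    open for the relative topology, i.e. the empty set, (a,b) with 0<=a<b,
    and [0,b) with 0<b.  An object is given by its underlying subset of R. *)
Definition is_C_interval (S : R -> Prop) : Prop :=
  (forall x, ~ S x)
  \/ (exists a b, 0 <= a /\ a < b /\ forall x, S x <-> (a < x /\ x < b))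
  \/ (exists b, 0 < b /\ forall x, S x <-> (0 <= x /\ x < b)).

Record Obj := mkObj { carrier : R -> Prop ; carrier_ok : is_C_interval carrier }.

Definition nonemptyO (U : Obj) : Prop := exists x, carrier U x.

(** Morphisms U -> V are positive integers n with n U ⊂ V when U is nonempty;
    Hom(∅, V) is a singleton, represented by n = 1.
    Composition is multiplication (and the unique map out of ∅). *)
Definition hom (U V : Obj) (n : nat) : Prop :=
  (0 < n)%nat
  /\ (nonemptyO U -> forall x, carrier U x -> carrier V (INR n * x))
  /\ (~ nonemptyO U -> n = 1%nat).

Record functor := mkFunctor {
  Fob : Obj -> Type ;
  Fmor : forall (U V : Obj) (n : nat), hom U V n -> Fob U -> Fob V }.

Arguments Fmor f {U V n} p x.

(** Functor laws.  The composite of n : U -> V and m : V -> W is the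
    morphism k : U -> W with k = m*n (when U ≠ ∅; when U = ∅ it is the
    unique morphism). *)
Definition is_functor (F : functor) : Prop :=
  (forall U (p : hom U U 1) x, Fmor F p x = x)
  /\ (forall U V W n m k (p : hom U V n) (q : hom V W m) (r : hom U W k) x,
        (nonemptyO U -> k = (m * n)%nat) ->
        Fmor F r x = Fmor F q (Fmor F p x)).

(** Flat = filtering (conditions (1)-(3) of the context). *)
Definition is_flat (F : functor) : Prop :=
  (exists (C : Obj) (a : Fob F C), True)
  /\ (forall (C1 C2 : Obj) (a1 : Fob F C1) (a2 : Fob F C2),
        exists (C : Obj) (a : Fob F C) (n1 n2 : nat)
               (u1 : hom C C1 n1) (u2 : hom C C2 n2),
          Fmor F u1 a = a1 /\ Fmor F u2 a = a2)
  /\ (forall (C D : Obj) (u v : nat) (pu : hom C D u) (pv : hom C D v)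
             (a : Fob F C),
        Fmor F pu a = Fmor F pv a ->
        exists (B : Obj) (b : Fob F B) (w : nat) (pw : hom B C w),
          (* u ∘ w = v ∘ w as morphisms B -> D *)
          (nonemptyO B -> (u * w)%nat = (v * w)%nat)
          /\ Fmor F pw b = a).

Definition is_cover (U : Obj) (I : Type) (Uj : I -> Obj) : Prop :=
  (forall j x, carrier (Uj j) x -> carrier U x)
  /\ (forall x, carrier U x -> exists j, carrier (Uj j) x).

(** Inclusions are the morphisms n = 1. *)
Definition is_continuous (F : functor) : Prop :=
  forall (U : Obj) (I : Type) (Uj : I -> Obj),
    is_cover U I Uj ->
    forall y : Fob F U,
      exists (j : I) (x : Fob F (Uj j)) (p : hom (Uj j) U 1), Fmor F p x = y.

(** Natural isomorphism of functors (= isomorphism of the associated points). *)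
Definition nat_iso (F G : functor) : Prop :=
  exists (alpha : forall U, Fob F U -> Fob G U)
         (beta : forall U, Fob G U -> Fob F U),
    (forall U x, beta U (alpha U x) = x)
    /\ (forall U y, alpha U (beta U y) = y)
    /\ (forall U V n (p : hom U V n) x,
          alpha V (Fmor F p x) = Fmor G p (alpha U x)).

Definition is_subgroup (S : R -> Prop) : Prop :=
  S 0 /\ (forall x y, S x -> S y -> S (x + y)) /\ (forall x, S x -> S (- x)).

Record subgroupR := mkSubgroupR { Hset : R -> Prop ; Hset_sub : is_subgroup Hset }.

Definition nontrivial (H : subgroupR) : Prop := exists x, Hset H x /\ x <> 0.

(** Rank one: isomorphic to a non-zero subgroup of Q.  Subgroups of Q are
    represented by their (isomorphic) images in R under Q2R. *)
Definition rank_one (H : subgroupR) : Prop :=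
  exists (S : R -> Prop) (phi : R -> R),
    is_subgroup S
    /\ (forall s, S s -> exists q : Q, s = Q2R q)
    /\ (exists s, S s /\ s <> 0)
    /\ (forall x, Hset H x -> S (phi x))
    /\ (forall x y, Hset H x -> Hset H y -> phi (x + y) = phi x + phi y)
    /\ (forall x y, Hset H x -> Hset H y -> phi x = phi y -> x = y)
    /\ (forall s, S s -> exists x, Hset H x /\ phi x = s).

Lemma Hset_mulnat (H : subgroupR) (n : nat) (x : R) :
  Hset H x -> Hset H (INR n * x).
Proof.
  destruct (Hset_sub H) as [H0 [Hadd _]]. intros Hx.
  induction n as [|n IH].
  - simpl. replace (0 * x) with 0 by ring. exact H0.
  - rewrite S_INR. replace ((INR n + 1) * x) with (INR n * x + x) by ring.
    apply Hadd; assumption.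
Qed.

Definition FH_ob (H : subgroupR) (V : Obj) : Type :=
  { x : R | carrier V x /\ Hset H x /\ 0 < x }.

Definition FH_mor (H : subgroupR) (U V : Obj) (n : nat) (p : hom U V n)
  (x : FH_ob H U) : FH_ob H V.
Proof.
  destruct x as [x [xU [xH xpos]]].
  exists (INR n * x). destruct p as [npos [pn _]]. split; [|split].
  - apply pn; [exists x; exact xU | exact xU].
  - apply Hset_mulnat; exact xH.
  - apply Rmult_lt_0_compat; [apply lt_0_INR; exact npos | exact xpos].
Defined.

Definition FH (H : subgroupR) : functor := mkFunctor (FH_ob H) (FH_mor H).

From Stdlib Require Import Reals Lra Lia ZArith ProofIrrelevance.
Open Scope R_scope.

(* Flatness reduces to the
   fact that two positive elements of a rank one group H are positive integer
   multiples of a common positive element of H (commensurability through the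
   embedding into Q, then the Euclidean algorithm inside H); a small interval
   around that element maps into any two given intervals.
   (ii) A natural transformation F_H1 -> F_H2 commutes with the inclusions of
   arbitrarily small intervals around a point r, hence fixes r; so it maps
   H1 ∩ (0,oo) identically into H2. *)

Section Subgroup.
Variable H : subgroupR.

Lemma subgroup_0 : Hset H 0.
Proof. destruct (Hset_sub H) as [? [? ?]]; auto. Qed.

Lemma subgroup_add x y : Hset H x -> Hset H y -> Hset H (x + y).
Proof. destruct (Hset_sub H) as [? [? ?]]; auto. Qed.

Lemma subgroup_opp x : Hset H x -> Hset H (- x).
Proof. destruct (Hset_sub H) as [? [? ?]]; auto. Qed.

Lemma subgroup_sub x y : Hset H x -> Hset H y -> Hset H (x - y).
Proof. intros; apply subgroup_add; [|apply subgroup_opp]; assumption. Qed.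

Lemma subgroup_zmul (z : Z) x : Hset H x -> Hset H (IZR z * x).
Proof.
  intros Hx. destruct z as [|p|p].
  - rewrite Rmult_0_l; apply subgroup_0.
  - rewrite <- positive_nat_Z, <- INR_IZR_INZ. apply Hset_mulnat, Hx.
  - rewrite <- Pos2Z.opp_pos, opp_IZR, <- positive_nat_Z, <- INR_IZR_INZ.
    replace (- INR (Pos.to_nat p) * x) with (- (INR (Pos.to_nat p) * x)) by ring.
    apply subgroup_opp, Hset_mulnat, Hx.
Qed.

Lemma subgroup_abs x : Hset H x -> Hset H (Rabs x).
Proof. intros Hx; unfold Rabs; destruct Rcase_abs; [apply subgroup_opp|]; exact Hx. Qed.

End Subgroup.

Lemma subgroup_incl_of_pos (A B : subgroupR) :
  (forall r, 0 < r -> Hset A r -> Hset B r) -> forall x, Hset A x -> Hset B x.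
Proof.
  intros K x Hx. destruct (Rtotal_order x 0) as [neg|[->|pos]].
  - replace x with (- - x) by ring.
    apply subgroup_opp, K; [lra|apply subgroup_opp, Hx].
  - apply subgroup_0.
  - apply K; assumption.
Qed.

Section AdditiveMap.
Variables (H : subgroupR) (phi : R -> R).
Hypothesis phi_add : forall x y, Hset H x -> Hset H y -> phi (x + y) = phi x + phi y.

Lemma additive_0 : phi 0 = 0.
Proof.
  pose proof (phi_add 0 0 (subgroup_0 H) (subgroup_0 H)) as E.
  rewrite Rplus_0_r in E; lra.
Qed.

Lemma additive_opp x : Hset H x -> phi (- x) = - phi x.
Proof.
  intros Hx. pose proof (phi_add x (- x) Hx (subgroup_opp H x Hx)) as E.
  rewrite Rplus_opp_r, additive_0 in E; lra.
Qed.

Lemma additive_natmul n x : Hset H x -> phi (INR n * x) = INR n * phi x.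
Proof.
  intros Hx; induction n as [|n IH].
  - rewrite !Rmult_0_l; apply additive_0.
  - rewrite S_INR, Rmult_plus_distr_r, Rmult_1_l, phi_add, IH;
      [ring|apply Hset_mulnat|]; assumption.
Qed.

Lemma additive_zmul (z : Z) x : Hset H x -> phi (IZR z * x) = IZR z * phi x.
Proof.
  intros Hx. destruct z as [|p|p].
  - rewrite !Rmult_0_l; apply additive_0.
  - rewrite <- positive_nat_Z, <- INR_IZR_INZ. apply additive_natmul, Hx.
  - rewrite <- Pos2Z.opp_pos, opp_IZR, <- positive_nat_Z, <- INR_IZR_INZ.
    rewrite !Ropp_mult_distr_l_reverse, additive_opp, additive_natmul;
      [reflexivity|assumption|apply Hset_mulnat, Hx].
Qed.

End AdditiveMap.

Lemma rank_one_commensurable H : rank_one H ->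
  forall a1 a2, Hset H a1 -> Hset H a2 -> 0 < a1 -> 0 < a2 ->
  exists p q : nat, (0 < p)%nat /\ (0 < q)%nat /\ INR p * a1 = INR q * a2.
Proof.
  intros (S & phi & _ & S_Q & _ & phi_S & phi_add & phi_inj & _) a1 a2 h1 h2 p1 p2.
  destruct (S_Q _ (phi_S a1 h1)) as [[z1 d1] E1].
  destruct (S_Q _ (phi_S a2 h2)) as [[z2 d2] E2].
  unfold Q2R in E1, E2; simpl in E1, E2.
  assert (nz : forall a z d, Hset H a -> 0 < a -> phi a = IZR z * / IZR (Z.pos d) ->
            z <> 0%Z).
  { intros a z d Ha pa Ea ->. assert (a = 0) by
      (apply phi_inj; [exact Ha|apply subgroup_0|];
       rewrite (additive_0 H phi phi_add), Ea; ring).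
    lra. }
  set (k1 := (z2 * Z.pos d1)%Z). set (k2 := (z1 * Z.pos d2)%Z).
  assert (k1a1_k2a2 : IZR k1 * a1 = IZR k2 * a2).
  { apply phi_inj; try (apply subgroup_zmul; assumption).
    rewrite !(additive_zmul H phi phi_add) by assumption.
    unfold k1, k2. rewrite !mult_IZR, E1, E2. field.
    split; apply not_0_IZR; lia. }
  exists (Z.abs_nat k1), (Z.abs_nat k2).
  pose proof (nz a1 z1 d1 h1 p1 E1). pose proof (nz a2 z2 d2 h2 p2 E2).
  split; [unfold k1; lia|split; [unfold k2; lia|]].
  rewrite !INR_IZR_INZ, !Nat2Z.inj_abs_nat, !abs_IZR.
  rewrite <- (Rabs_pos_eq a1), <- (Rabs_pos_eq a2) by lra.
  rewrite <- !Rabs_mult, k1a1_k2a2; reflexivity.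
Qed.

(* The Euclidean algorithm run on p c and q c inside H. *)
Lemma subgroup_common_divisor H p q c :
  (0 < p)%nat -> (0 < q)%nat -> 0 < c ->
  Hset H (INR p * c) -> Hset H (INR q * c) ->
  exists a n1 n2, Hset H a /\ 0 < a /\ (0 < n1)%nat /\ (0 < n2)%nat /\
    INR p * c = INR n1 * a /\ INR q * c = INR n2 * a.
Proof.
  intros hp hq hc. remember (p + q)%nat as N eqn:EN.
  assert (hN : (p + q <= N)%nat) by lia. clear EN. revert p q hp hq hN.
  induction N as [|N IH]; intros p q hp hq hN m1 m2; [lia|].
  destruct (lt_eq_lt_dec p q) as [[p_lt_q|<-]|q_lt_p].
  - destruct (IH p (q - p)%nat) as (a & n1 & m & A & B & C & D & E & F); try lia.
    + assumption.
    + rewrite minus_INR, Rmult_minus_distr_r by lia. apply subgroup_sub; assumption.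
    + exists a, n1, (n1 + m)%nat. repeat split; try assumption; try lia.
      rewrite plus_INR, Rmult_plus_distr_r, <- E, <- F, minus_INR by lia. ring.
  - exists (INR p * c), 1%nat, 1%nat.
    assert (0 < INR p * c) by (apply Rmult_lt_0_compat; [apply lt_0_INR|]; assumption).
    repeat split; try assumption; try lia; simpl; ring.
  - destruct (IH (p - q)%nat q) as (a & m & n2 & A & B & C & D & E & F); try lia.
    + rewrite minus_INR, Rmult_minus_distr_r by lia. apply subgroup_sub; assumption.
    + assumption.
    + exists a, (m + n2)%nat, n2. repeat split; try assumption; try lia.
      rewrite plus_INR, Rmult_plus_distr_r, <- E, <- F, minus_INR by lia. ring.
Qed.

Lemma rank_one_common_divisor H : rank_one H ->
  forall a1 a2, Hset H a1 -> Hset H a2 -> 0 < a1 -> 0 < a2 ->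
  exists a n1 n2, Hset H a /\ 0 < a /\ (0 < n1)%nat /\ (0 < n2)%nat /\
    a1 = INR n1 * a /\ a2 = INR n2 * a.
Proof.
  intros Hr a1 a2 h1 h2 p1 p2.
  destruct (rank_one_commensurable H Hr a1 a2 h1 h2 p1 p2) as (p & q & hp & hq & E).
  assert (Iq : 0 < INR q) by (apply lt_0_INR; exact hq).
  assert (a1_eq : a1 = INR q * (a1 / INR q)) by (field; lra).
  assert (a2_eq : a2 = INR p * (a1 / INR q)).
  { apply (Rmult_eq_reg_l (INR q)); [|lra]. rewrite <- E. field. lra. }
  rewrite a1_eq in h1 |- *. rewrite a2_eq in h2 |- *.
  apply subgroup_common_divisor; try assumption.
  apply Rdiv_lt_0_compat; assumption.
Qed.

Definition ball (c d : R) : R -> Prop := fun x => c - d < x < c + d.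

Lemma ball_C_interval c d : 0 < d -> d <= c -> is_C_interval (ball c d).
Proof.
  intros hd hdc; right; left; exists (c - d), (c + d).
  split; [lra|split; [lra|]]. intros x; unfold ball; tauto.
Qed.

Definition ball_obj c d (hd : 0 < d) (hdc : d <= c) : Obj :=
  mkObj (ball c d) (ball_C_interval c d hd hdc).

Lemma ball_obj_center c d hd hdc : carrier (ball_obj c d hd hdc) c.
Proof. simpl; unfold ball; lra. Qed.

Lemma Obj_nbhd (U : Obj) x : carrier U x -> 0 < x ->
  exists e, 0 < e /\ forall y, ball x e y -> carrier U y.
Proof.
  destruct U as [S [Emp|[(a & b & ha & hab & E)|(b & hb & E)]]]; simpl; intros hx px.
  - destruct (Emp x hx).
  - apply E in hx. exists (Rmin (x - a) (b - x)).
    pose proof (Rmin_l (x - a) (b - x)). pose proof (Rmin_r (x - a) (b - x)).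
    split; [apply Rmin_glb_lt; lra|]. intros y [? ?]. apply E. lra.
  - apply E in hx. exists (Rmin x (b - x)).
    pose proof (Rmin_l x (b - x)). pose proof (Rmin_r x (b - x)).
    split; [apply Rmin_glb_lt; lra|]. intros y [? ?]. apply E. lra.
Qed.

Lemma incl_hom (U V : Obj) : (forall x, carrier U x -> carrier V x) -> hom U V 1.
Proof.
  intros sub; split; [lia|split; [|reflexivity]].
  intros _ x hx; rewrite Rmult_1_l; apply sub, hx.
Qed.

Lemma ball_obj_hom c d hd hdc (V : Obj) n e :
  (0 < n)%nat -> (forall y, ball (INR n * c) e y -> carrier V y) -> INR n * d <= e ->
  hom (ball_obj c d hd hdc) V n.
Proof.
  intros hn sub hde. assert (In : 0 < INR n) by (apply lt_0_INR, hn).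
  split; [exact hn|split].
  - intros _ y [y1 y2]. apply sub. unfold ball.
    assert (INR n * (y - c) < INR n * d) by (apply Rmult_lt_compat_l; lra).
    assert (INR n * (c - y) < INR n * d) by (apply Rmult_lt_compat_l; lra).
    split; nra.
  - intros ne; destruct ne; eexists; apply ball_obj_center.
Qed.

Definition FH_elt H U x (hU : carrier U x) (hH : Hset H x) (hx : 0 < x) : FH_ob H U :=
  exist _ x (conj hU (conj hH hx)).

Lemma FH_ob_eq H U (x y : FH_ob H U) : proj1_sig x = proj1_sig y -> x = y.
Proof.
  destruct x as [x px], y as [y py]; simpl; intros ->.
  f_equal; apply proof_irrelevance.
Qed.

Lemma FH_mor_val H U V n (p : hom U V n) (x : FH_ob H U) :
  proj1_sig (FH_mor H U V n p x) = INR n * proj1_sig x.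
Proof. destruct x as [x [? [? ?]]]; destruct p as [? [? ?]]; reflexivity. Qed.

Lemma is_functor_FH H : is_functor (FH H).
Proof.
  split.
  - intros U p x. apply FH_ob_eq; cbn [Fmor FH]. rewrite FH_mor_val; simpl; ring.
  - intros U V W n m k p q r x Hk. apply FH_ob_eq; cbn [Fmor FH].
    rewrite !FH_mor_val, Hk, mult_INR by (exists (proj1_sig x); apply (proj2_sig x)).
    ring.
Qed.

Lemma is_continuous_FH H : is_continuous (FH H).
Proof.
  intros U I Uj [sub cov] [y [yU [yH ypos]]].
  destruct (cov y yU) as [j yUj].
  exists j, (FH_elt H (Uj j) y yUj yH ypos), (incl_hom (Uj j) U (sub j)).
  apply FH_ob_eq; cbn [Fmor FH]. rewrite FH_mor_val; simpl; ring.
Qed.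

Lemma FH_inhabited H : nontrivial H -> exists (C : Obj) (a : Fob (FH H) C), True.
Proof.
  intros [x [Hx nx]].
  assert (pos : 0 < Rabs x) by (apply Rabs_pos_lt, nx).
  exists (ball_obj (Rabs x) (Rabs x) pos (Rle_refl _)).
  exists (FH_elt H _ _ (ball_obj_center _ _ _ _) (subgroup_abs H x Hx) pos).
  exact I.
Qed.

Lemma FH_filtering_pairs H : rank_one H ->
  forall (C1 C2 : Obj) (a1 : Fob (FH H) C1) (a2 : Fob (FH H) C2),
  exists (C : Obj) (a : Fob (FH H) C) (n1 n2 : nat)
         (u1 : hom C C1 n1) (u2 : hom C C2 n2),
    Fmor (FH H) u1 a = a1 /\ Fmor (FH H) u2 a = a2.
Proof.
  intros Hr C1 C2 [x1 [c1 [hx1 px1]]] [x2 [c2 [hx2 px2]]].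
  destruct (rank_one_common_divisor H Hr x1 x2 hx1 hx2 px1 px2)
    as (a & n1 & n2 & Ha & pa & pn1 & pn2 & e1 & e2).
  destruct (Obj_nbhd C1 x1 c1 px1) as (d1 & pd1 & N1).
  destruct (Obj_nbhd C2 x2 c2 px2) as (d2 & pd2 & N2).
  assert (I1 : 0 < INR n1) by (apply lt_0_INR, pn1).
  assert (I2 : 0 < INR n2) by (apply lt_0_INR, pn2).
  set (d := Rmin a (Rmin (d1 / INR n1) (d2 / INR n2))).
  assert (hd : 0 < d) by
    (repeat apply Rmin_glb_lt; try apply Rdiv_lt_0_compat; assumption).
  assert (hda : d <= a) by apply Rmin_l.
  assert (le_d1 : INR n1 * d <= d1).
  { apply (Rmult_le_reg_r (/ INR n1)); [apply Rinv_0_lt_compat, I1|].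
    replace (INR n1 * d * / INR n1) with d by (field; lra).
    eapply Rle_trans; [apply Rmin_r|apply Rmin_l]. }
  assert (le_d2 : INR n2 * d <= d2).
  { apply (Rmult_le_reg_r (/ INR n2)); [apply Rinv_0_lt_compat, I2|].
    replace (INR n2 * d * / INR n2) with d by (field; lra).
    eapply Rle_trans; [apply Rmin_r|apply Rmin_r]. }
  rewrite e1 in N1. rewrite e2 in N2.
  exists (ball_obj a d hd hda), (FH_elt H _ a (ball_obj_center _ _ _ _) Ha pa), n1, n2,
    (ball_obj_hom a d hd hda C1 n1 d1 pn1 N1 le_d1),
    (ball_obj_hom a d hd hda C2 n2 d2 pn2 N2 le_d2).
  split; apply FH_ob_eq; cbn [Fmor FH]; rewrite FH_mor_val; simpl; congruence.
Qed.

(* Elements of F_H are positive, so multiplication by u and by v can only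
   agree on one of them if u = v. *)
Lemma FH_filtering_equalizers H :
  forall (C D : Obj) (u v : nat) (pu : hom C D u) (pv : hom C D v) (a : Fob (FH H) C),
  Fmor (FH H) pu a = Fmor (FH H) pv a ->
  exists (B : Obj) (b : Fob (FH H) B) (w : nat) (pw : hom B C w),
    (nonemptyO B -> (u * w)%nat = (v * w)%nat) /\ Fmor (FH H) pw b = a.
Proof.
  intros C D u v pu pv a E.
  assert (u_v : u = v).
  { apply (f_equal (@proj1_sig _ _)) in E. cbn [Fmor FH] in E. rewrite !FH_mor_val in E.
    destruct (proj2_sig a) as [_ [_ pos]].
    apply INR_eq, (Rmult_eq_reg_r (proj1_sig a)); [exact E|lra]. }
  exists C, a, 1%nat, (incl_hom C C (fun x hx => hx)).
  split; [intros _; rewrite u_v; reflexivity|apply (proj1 (is_functor_FH H))].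
Qed.

Lemma is_flat_FH H : nontrivial H -> rank_one H -> is_flat (FH H).
Proof.
  intros Hnt Hr. split; [|split].
  - apply FH_inhabited, Hnt.
  - apply FH_filtering_pairs, Hr.
  - apply FH_filtering_equalizers.
Qed.

Lemma eq_of_forall_ball y r e0 : 0 < e0 -> (forall e, 0 < e -> e <= e0 -> ball r e y) -> y = r.
Proof.
  intros he0 K. destruct (Req_dec y r) as [->|ne]; [reflexivity|exfalso].
  assert (pos : 0 < Rabs (y - r)) by (apply Rabs_pos_lt; lra).
  destruct (K (Rmin e0 (Rabs (y - r)))) as [k1 k2];
    [apply Rmin_glb_lt; assumption|apply Rmin_l|].
  pose proof (Rmin_r e0 (Rabs (y - r))) as k3.
  revert k1 k2 k3. unfold Rabs; destruct Rcase_abs; lra.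
Qed.

Section NaturalTransformation.
Variables H1 H2 : subgroupR.
Variable alpha : forall U, Fob (FH H1) U -> Fob (FH H2) U.
Hypothesis alpha_natural : forall U V n (p : hom U V n) x,
  alpha V (Fmor (FH H1) p x) = Fmor (FH H2) p (alpha U x).

(* x is the image of itself under the inclusion of any small ball around it,
   so alpha x lies in every such ball. *)
Lemma nat_trans_FH_val U (x : Fob (FH H1) U) : proj1_sig (alpha U x) = proj1_sig x.
Proof.
  destruct x as [r [rU [rH rpos]]] eqn:Ex; simpl.
  destruct (Obj_nbhd U r rU rpos) as (e0 & he0 & N).
  apply (eq_of_forall_ball _ _ (Rmin e0 r)); [apply Rmin_glb_lt; assumption|].
  intros e he hle.
  assert (her : e <= r) by (eapply Rle_trans; [exact hle|apply Rmin_r]).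
  set (V := ball_obj r e he her).
  assert (i : hom V U 1).
  { apply incl_hom. intros y [y1 y2]. apply N.
    pose proof (Rmin_l e0 r). unfold ball; lra. }
  assert (restrict : Fmor (FH H1) i (FH_elt H1 V r (ball_obj_center _ _ _ _) rH rpos) = x).
  { rewrite Ex. apply FH_ob_eq; cbn [Fmor FH]. rewrite FH_mor_val; simpl; ring. }
  rewrite <- Ex, <- restrict, alpha_natural. simpl. rewrite FH_mor_val, Rmult_1_l.
  apply (proj2_sig (alpha V _)).
Qed.

Lemma nat_trans_FH_incl x : Hset H1 x -> Hset H2 x.
Proof.
  apply subgroup_incl_of_pos. intros r rpos rH.
  set (x' := FH_elt H1 _ r (ball_obj_center r r rpos (Rle_refl r)) rH rpos).
  rewrite <- (nat_trans_FH_val _ x' : proj1_sig (alpha _ x') = r).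
  apply (proj2_sig (alpha _ x')).
Qed.

End NaturalTransformation.

Lemma nat_iso_sym F G : nat_iso F G -> nat_iso G F.
Proof.
  intros (alpha & beta & ba & ab & alpha_nat).
  exists beta, alpha. split; [exact ab|split; [exact ba|]].
  intros U V n p y.
  rewrite <- (ba V (Fmor F p (beta U y))), alpha_nat, ab. reflexivity.
Qed.

Lemma nat_iso_FH_Hset H1 H2 : nat_iso (FH H1) (FH H2) -> forall x, Hset H1 x <-> Hset H2 x.
Proof.
  intros iso x. split.
  - destruct iso as (alpha & _ & _ & _ & nat). exact (nat_trans_FH_incl H1 H2 alpha nat x).
  - destruct (nat_iso_sym _ _ iso) as (alpha & _ & _ & _ & nat).
    exact (nat_trans_FH_incl H2 H1 alpha nat x).
Qed.

Theorem proposition3p3 :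
  (* (i) F_H is a flat continuous functor C -> Sets *)
  (forall H : subgroupR, nontrivial H -> rank_one H ->
     is_functor (FH H) /\ is_flat (FH H) /\ is_continuous (FH H))
  /\
  (* (ii) H |-> p_H is injective on isomorphism classes of points *)
  (forall H1 H2 : subgroupR,
     nontrivial H1 -> rank_one H1 -> nontrivial H2 -> rank_one H2 ->
     nat_iso (FH H1) (FH H2) ->
     forall x, Hset H1 x <-> Hset H2 x).
Proof.
  split.
  - intros H Hnt Hr. split; [|split].
    + apply is_functor_FH.
    + apply is_flat_FH; assumption.
    + apply is_continuous_FH.
  - intros H1 H2 _ _ _ _. apply nat_iso_FH_Hset.
Qed.
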